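(* Let $U$ be an $r$-dimensional subspace of $\mathbb{R}^d$, $0\ne v\in U^\perp$, $\delta\in(0,1)$, and let $\Omega$ be a list of $m$ indices sampled independently and uniformly with replacement from $[d]$, where $m\ge 4\mu(v)\log(1/\delta)$. Let $\beta=(1+2\log(1/\delta))^2$. Then with probability at least $1-\delta$, $$\|U_\Omega^Tv_\Omega\|_2^2\le\beta\,\frac md\,\frac{r\mu(U)}{d}\,\|v\|_2^2.$$
   Context: For an $r$-dimensional subspace $U\subseteq\mathbb{R}^d$, $\mu(U)=\frac{d}{r}\max_{i\in[d]}\|\mathcal{P}_Ue_i\|_2^2$; for a nonzero $v\in\mathbb{R}^d$, $\mu(v)=d\|v\|_\infty^2/\|v\|_2^2$. For a list $\Omega\in[d]^m$, $v_\Omega\in\mathbb{R}^m$ has $j$th entry $v(\Omega(j))$. Taking $U$ also to denote a $d\times r$ matrix with orthonormal columns spanning $U$, $U_\Omega$ is the $m\times r$ matrix whose $j$th row is row $\Omega(j)$ of $U$. *)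

(* real numbers (need ln), vectors in R^d as functions nat -> R
   restricted to indices < d, and a d x r matrix as nat -> nat -> R. *)
From Stdlib Require Import Reals List.
Import ListNotations.
Open Scope R_scope.

Fixpoint sumR (n : nat) (f : nat -> R) : R :=
  match n with O => 0 | S k => sumR k f + f k end.

(* maxR n f = max of f 0, ..., f (n-1) (0 if n = 0; used on nonnegative values) *)
Fixpoint maxR (n : nat) (f : nat -> R) : R :=
  match n with O => 0 | S k => Rmax (maxR k f) (f k) end.

Definition norm2sq (d : nat) (v : nat -> R) : R := sumR d (fun i => v i ^ 2).

Definition orthonormal_cols (d r : nat) (U : nat -> nat -> R) : Prop :=
  forall k l, (k < r)%nat -> (l < r)%nat ->
    sumR d (fun i => U i k * U i l) = if Nat.eqb k l then 1 else 0.

Definition in_perp (d r : nat) (U : nat -> nat -> R) (v : nat -> R) : Prop :=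
  forall k, (k < r)%nat -> sumR d (fun i => U i k * v i) = 0.

(* projection P_U = U U^T applied to e_i : coordinate j *)
Definition proj_e (r : nat) (U : nat -> nat -> R) (i j : nat) : R :=
  sumR r (fun k => U j k * U i k).

Definition muU (d r : nat) (U : nat -> nat -> R) : R :=
  INR d / INR r * maxR d (fun i => norm2sq d (proj_e r U i)).

Definition muv (d : nat) (v : nat -> R) : R :=
  INR d * (maxR d (fun i => Rabs (v i))) ^ 2 / norm2sq d v.

(* all lists of length m with entries in {0,...,d-1} (i.e. [d]^m, 0-based) *)
Fixpoint all_lists (d m : nat) : list (list nat) :=
  match m with
  | O => [ [] ]
  | S k => flat_map (fun i => map (cons i) (all_lists d k)) (seq 0 d)
  end.

Definition sampled_sq (r : nat) (U : nat -> nat -> R) (v : nat -> R) (Om : list nat) : R :=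
  sumR r (fun k => (sumR (length Om) (fun j => U (nth j Om 0%nat) k * v (nth j Om 0%nat))) ^ 2).

(* probability, under uniform i.i.d. sampling with replacement of m indices
   from [d], that the event  f Om <= c  holds *)
Definition prob_le (d m : nat) (f : list nat -> R) (c : R) : R :=
  INR (length (filter (fun Om => if Rle_dec (f Om) c then true else false)
                      (all_lists d m)))
  / (INR d ^ m).

(* The sampled vector [U_Omega^T v_Omega] is the endpoint of a random walk in R^r
   whose steps are the rows of [U] scaled by the entries of [v]: [X_i = v_i U_(i,.)].
   Because [v] is orthogonal to the columns of [U] the steps have mean zero; their
   mean square is at most [sigma = (r mu(U) / d) |v|^2 / d], and the sample-size
   hypothesis bounds each [|X_i|^2] by [m sigma / (4 log (1/delta))].
   When [L = log (1/delta) <= 9/4], Markov's inequality for the second moment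
   [E |S_m|^2 <= m sigma] suffices, since then [e^L <= (1 + 2L)^2].  Otherwise the
   potential [exp (s/q sqrt (q^2 + |w|^2))] with [q^2 = m sigma] and [s^2 = L]
   grows in expectation by at most [exp (K sigma)] per step (a second-order
   expansion, using mean zero and the step bound), and Markov's inequality for the
   potential gives the tail [e^(-L) = delta].  Probabilities are exact counts over
   the [d^m] index lists. *)

From Stdlib Require Import Reals List Lra Lia Psatz.
Import ListNotations.
Open Scope R_scope.

Lemma sumR_ext n f g : (forall i, (i < n)%nat -> f i = g i) -> sumR n f = sumR n g.
Proof.
  induction n as [|n IH]; intros H; simpl; auto.
  rewrite IH, H; auto; intros; apply H; lia.
Qed.

Lemma sumR_le n f g : (forall i, (i < n)%nat -> f i <= g i) -> sumR n f <= sumR n g.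
Proof.
  induction n as [|n IH]; intros H; simpl; [lra|].
  apply Rplus_le_compat; [apply IH; intros|]; apply H; lia.
Qed.

Lemma sumR_plus n f g : sumR n (fun i => f i + g i) = sumR n f + sumR n g.
Proof. induction n as [|n IH]; simpl; [lra|]. rewrite IH; ring. Qed.

Lemma sumR_scal n c f : sumR n (fun i => c * f i) = c * sumR n f.
Proof. induction n as [|n IH]; simpl; [ring|]. rewrite IH; ring. Qed.

Lemma sumR_lin3 n a b c f g h :
  sumR n (fun i => a * f i + b * g i + c * h i) = a * sumR n f + b * sumR n g + c * sumR n h.
Proof. rewrite !sumR_plus, !sumR_scal. reflexivity. Qed.

Lemma sumR_const n c : sumR n (fun _ => c) = INR n * c.
Proof. induction n as [|n IH]; simpl sumR; [simpl; ring|]. rewrite IH, S_INR; ring. Qed.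

Lemma sumR_swap n m f :
  sumR n (fun i => sumR m (fun j => f i j)) = sumR m (fun j => sumR n (fun i => f i j)).
Proof.
  induction n as [|n IH]; simpl.
  - rewrite sumR_const; ring.
  - rewrite IH, <- sumR_plus. reflexivity.
Qed.

Lemma sumR_nonneg n f : (forall i, (i < n)%nat -> 0 <= f i) -> 0 <= sumR n f.
Proof. intros H. rewrite <- (Rmult_0_r (INR n)), <- sumR_const. apply sumR_le, H. Qed.

Lemma sumR_term_le n f k :
  (forall i, (i < n)%nat -> 0 <= f i) -> (k < n)%nat -> f k <= sumR n f.
Proof.
  induction n as [|n IH]; intros H Hk; [lia|]. simpl.
  destruct (Nat.eq_dec k n) as [->|Hkn].
  - enough (0 <= sumR n f) by lra. apply sumR_nonneg; intros; apply H; lia.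
  - enough (f k <= sumR n f /\ 0 <= f n) by lra.
    split; [apply IH; [intros|lia]|]; apply H; lia.
Qed.

Lemma sumR_S_l n f : sumR (S n) f = f 0%nat + sumR n (fun j => f (S j)).
Proof. induction n as [|n IH]; simpl in *; [ring|]. rewrite IH; ring. Qed.

Lemma sumR_kronecker r a k : (k < r)%nat ->
  sumR r (fun l => a l * (if Nat.eqb k l then 1 else 0)) = a k.
Proof.
  induction r as [|r IH]; intros Hk; [lia|]. simpl.
  destruct (Nat.eq_dec k r) as [->|Hkr].
  - rewrite Nat.eqb_refl, (sumR_ext r _ (fun _ => 0)), sumR_const; [ring|].
    intros i Hi. destruct (Nat.eqb_spec r i); [lia|ring].
  - rewrite IH by lia. destruct (Nat.eqb_spec k r); [lia|ring].
Qed.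

Lemma sumR_mul n f g :
  sumR n f * sumR n g = sumR n (fun k => sumR n (fun l => f k * g l)).
Proof.
  rewrite Rmult_comm, <- sumR_scal. apply sumR_ext; intros.
  rewrite Rmult_comm, <- sumR_scal. apply sumR_ext; intros; ring.
Qed.

Lemma maxR_ge n f i : (i < n)%nat -> f i <= maxR n f.
Proof.
  induction n as [|n IH]; intros Hi; [lia|]. simpl.
  destruct (Nat.eq_dec i n) as [->|Hin]; [apply Rmax_r|].
  eapply Rle_trans; [apply IH; lia|apply Rmax_l].
Qed.

Fixpoint lsum {A} (l : list A) (g : A -> R) : R :=
  match l with [] => 0 | x :: t => g x + lsum t g end.

Lemma lsum_app {A} (l1 l2 : list A) g : lsum (l1 ++ l2) g = lsum l1 g + lsum l2 g.
Proof. induction l1 as [|x l1 IH]; simpl; [ring|]. rewrite IH; ring. Qed.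

Lemma lsum_map {A B} (h : A -> B) l g : lsum (map h l) g = lsum l (fun x => g (h x)).
Proof. induction l as [|x l IH]; simpl; congruence. Qed.

Lemma lsum_all_lists_S d m g :
  lsum (all_lists d (S m)) g = sumR d (fun i => lsum (all_lists d m) (fun Om => g (i :: Om))).
Proof.
  simpl. generalize (all_lists d m) as L. intros L.
  induction d as [|d IH]; [reflexivity|].
  rewrite seq_S, flat_map_app, lsum_app, IH. simpl.
  rewrite app_nil_r, lsum_map. reflexivity.
Qed.

Lemma lsum_one {A} (l : list A) : lsum l (fun _ => 1) = INR (length l).
Proof.
  induction l as [|x l IH]; simpl lsum; simpl length; [simpl; ring|].
  rewrite IH, S_INR; ring.
Qed.

Lemma length_all_lists d m : INR (length (all_lists d m)) = INR d ^ m.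
Proof.
  rewrite <- lsum_one. induction m as [|m IH]; [simpl; ring|].
  rewrite lsum_all_lists_S, (sumR_ext _ _ (fun _ => INR d ^ m)), sumR_const by auto.
  simpl; ring.
Qed.

Lemma markov_count {A} (l : list A) (f Phi : A -> R) (c a : R) :
  (forall x, 0 <= Phi x) -> (forall x, c < f x -> a <= Phi x) ->
  a * (INR (length l)
       - INR (length (filter (fun x => if Rle_dec (f x) c then true else false) l)))
  <= lsum l Phi.
Proof.
  intros HPhi Ha. induction l as [|x l IH]; [simpl; lra|]. cbn [filter length lsum].
  specialize (HPhi x). destruct (Rle_dec (f x) c) as [Hle|Hgt].
  - cbn [length]. rewrite !S_INR. lra.
  - rewrite S_INR. assert (a <= Phi x) by (apply Ha; lra). lra.
Qed.

Lemma prob_le_markov d m f c Phi a delta :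
  (0 < d)%nat -> 0 < a -> (forall Om, 0 <= Phi Om) -> (forall Om, c < f Om -> a <= Phi Om) ->
  lsum (all_lists d m) Phi <= a * delta * INR d ^ m -> prob_le d m f c >= 1 - delta.
Proof.
  intros Hd Ha HPhi Hbad Hsum. unfold prob_le.
  assert (HD : 0 < INR d ^ m) by (apply pow_lt, lt_0_INR; lia).
  pose proof (markov_count (all_lists d m) f Phi c a HPhi Hbad) as Hcount.
  rewrite length_all_lists in Hcount.
  set (good := INR (length _)) in *.
  apply Rle_ge, (Rmult_le_reg_r (INR d ^ m)); [exact HD|].
  replace (good / INR d ^ m * INR d ^ m) with good by (field; lra).
  apply (Rmult_le_reg_l a); nra.
Qed.

Lemma prob_le_ext d m f g c :
  (forall Om, f Om = g Om) -> prob_le d m f c = prob_le d m g c.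
Proof.
  intros Hfg. unfold prob_le. do 3 f_equal.
  apply filter_ext. intros Om. rewrite Hfg. reflexivity.
Qed.

Definition vadd (w x : nat -> R) : nat -> R := fun k => w k + x k.

Fixpoint walk (X : nat -> nat -> R) (w : nat -> R) (Om : list nat) : nat -> R :=
  match Om with [] => w | i :: t => walk X (vadd w (X i)) t end.

Lemma walk_eq X w Om k :
  walk X w Om k = w k + sumR (length Om) (fun j => X (nth j Om 0%nat) k).
Proof.
  revert w. induction Om as [|i Om IH]; intros w; [simpl; ring|].
  cbn [walk length]. rewrite IH, sumR_S_l. unfold vadd. simpl. ring.
Qed.

Lemma lsum_walk_le_mul d X (Phi : (nat -> R) -> R) K :
  0 <= K -> (forall w, sumR d (fun i => Phi (vadd w (X i))) <= INR d * K * Phi w) ->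
  forall m w, lsum (all_lists d m) (fun Om => Phi (walk X w Om)) <= (INR d * K) ^ m * Phi w.
Proof.
  intros HK Hstep m. assert (Hd := pos_INR d).
  induction m as [|m IH]; intros w; [simpl; lra|].
  rewrite lsum_all_lists_S. simpl walk.
  apply Rle_trans with (sumR d (fun i => (INR d * K) ^ m * Phi (vadd w (X i)))).
  - apply sumR_le; intros; apply IH.
  - rewrite sumR_scal. assert (0 <= (INR d * K) ^ m) by (apply pow_le; nra).
    specialize (Hstep w). simpl. nra.
Qed.

Lemma lsum_walk_le_add d X (Phi : (nat -> R) -> R) c :
  (forall w, sumR d (fun i => Phi (vadd w (X i))) <= INR d * (Phi w + c)) ->
  forall m w, lsum (all_lists d m) (fun Om => Phi (walk X w Om)) <= INR d ^ m * (Phi w + INR m * c).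
Proof.
  intros Hstep m. assert (Hd := pos_INR d).
  induction m as [|m IH]; intros w; [simpl; lra|].
  rewrite lsum_all_lists_S. simpl walk.
  apply Rle_trans with (sumR d (fun i => INR d ^ m * (Phi (vadd w (X i)) + INR m * c))).
  - apply sumR_le; intros; apply IH.
  - rewrite sumR_scal, sumR_plus, sumR_const, S_INR.
    assert (0 <= INR d ^ m) by (apply pow_le; lra).
    specialize (Hstep w). simpl. nra.
Qed.

Definition nrm2 (r : nat) (w : nat -> R) : R := sumR r (fun k => w k ^ 2).
Definition ip (r : nat) (w x : nat -> R) : R := sumR r (fun k => w k * x k).

Lemma nrm2_nonneg r w : 0 <= nrm2 r w.
Proof. apply sumR_nonneg; intros; apply pow2_ge_0. Qed.

Lemma nrm2_zero r : nrm2 r (fun _ => 0) = 0.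
Proof. unfold nrm2. rewrite (sumR_ext r _ (fun _ => 0)), sumR_const by (intros; ring). ring. Qed.

Lemma nrm2_vadd r w x : nrm2 r (vadd w x) = nrm2 r w + 2 * ip r w x + nrm2 r x.
Proof.
  unfold nrm2, ip, vadd. rewrite <- (Rmult_1_l (sumR r (fun k => w k ^ 2))),
    <- (Rmult_1_l (sumR r (fun k => x k ^ 2))), <- sumR_lin3.
  apply sumR_ext; intros; ring.
Qed.

(* Lagrange's identity: [2 (|w|^2 |x|^2 - <w,x>^2)] is the sum of all [(w_k x_l - w_l x_k)^2]. *)
Lemma ip_sq_le r w x : ip r w x ^ 2 <= nrm2 r w * nrm2 r x.
Proof.
  assert (Hlag : sumR r (fun k => sumR r (fun l => (w k * x l - w l * x k) ^ 2))
                 = nrm2 r w * nrm2 r x + nrm2 r x * nrm2 r w - 2 * ip r w x ^ 2).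
  { unfold nrm2, ip. rewrite <- Rsqr_pow2. unfold Rsqr. rewrite !sumR_mul.
    rewrite <- (Rmult_1_l (sumR r (fun k => sumR r (fun l => w k ^ 2 * x l ^ 2)))),
      <- (Rmult_1_l (sumR r (fun k => sumR r (fun l => x k ^ 2 * w l ^ 2)))).
    rewrite Rminus_def, Ropp_mult_distr_l, <- sumR_lin3.
    apply sumR_ext; intros. rewrite <- sumR_lin3. apply sumR_ext; intros; ring. }
  enough (0 <= sumR r (fun k => sumR r (fun l => (w k * x l - w l * x k) ^ 2))) by lra.
  apply sumR_nonneg; intros; apply sumR_nonneg; intros; apply pow2_ge_0.
Qed.

Lemma div_nonneg a b : 0 <= a -> 0 < b -> 0 <= a / b.
Proof. intros Ha Hb. apply Rmult_le_pos; [exact Ha|left; apply Rinv_0_lt_compat, Hb]. Qed.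

Lemma exp_le x y : x <= y -> exp x <= exp y.
Proof. intros [Hlt|<-]; [left; apply exp_increasing, Hlt|right; reflexivity]. Qed.

Lemma exp_pow x m : exp x ^ m = exp (INR m * x).
Proof. rewrite <- Rpower_pow by apply exp_pos. unfold Rpower. rewrite ln_exp. reflexivity. Qed.

(* From [1 - x/4 <= exp (-x/4)], raised to the fourth power. *)
Lemma exp_mul_pow4_le x : x < 4 -> exp x * (1 - x / 4) ^ 4 <= 1.
Proof.
  intros Hx.
  assert (H1 : exp (x / 4) * (1 - x / 4) <= 1).
  { assert (1 + - (x / 4) <= exp (- (x / 4))) by apply exp_ineq1_le.
    assert (exp (x / 4) * exp (- (x / 4)) = 1)
      by (rewrite <- exp_plus, Rplus_opp_r; apply exp_0).
    assert (0 < exp (x / 4)) by apply exp_pos. nra. }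
  replace (exp x) with (exp (x / 4) ^ 4) by (rewrite exp_pow; f_equal; simpl; field).
  rewrite <- Rpow_mult_distr. apply (Rle_trans _ (1 ^ 4)); [|simpl; lra].
  apply pow_incr. split; [|exact H1].
  apply Rmult_le_pos; [left; apply exp_pos|lra].
Qed.

Lemma exp_le_quadratic z : Rabs z <= 0.6 -> exp z <= 1 + z + z ^ 2.
Proof.
  intros Habs.
  assert (Hz : -0.6 <= z <= 0.6).
  { pose proof (Rle_abs z). pose proof (Rle_abs (- z)). rewrite Rabs_Ropp in *. lra. }
  assert (H := exp_mul_pow4_le z ltac:(lra)).
  assert (Hpoly : 1 <= (1 + z + z ^ 2) * (1 - z / 4) ^ 4) by nra.
  apply (Rmult_le_reg_r ((1 - z / 4) ^ 4)); [apply pow_lt; lra|lra].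
Qed.

Lemma exp_le_sq_one_add_twice L : 0 <= L <= 9 / 4 -> exp L <= (1 + 2 * L) ^ 2.
Proof.
  intros HL.
  assert (Hhalf : exp (L / 2) <= 1 + 2 * L).
  { assert (H := exp_mul_pow4_le (L / 2) ltac:(lra)).
    assert (Hpoly : 1 <= (1 + 2 * L) * (1 - L / 2 / 4) ^ 4) by nra.
    apply (Rmult_le_reg_r ((1 - L / 2 / 4) ^ 4)); [apply pow_lt; lra|lra]. }
  replace (exp L) with (exp (L / 2) ^ 2) by (rewrite exp_pow; f_equal; simpl; field).
  apply pow_incr. split; [left; apply exp_pos|exact Hhalf].
Qed.

Lemma sqrt_add_le h y : 0 < h -> 0 <= h ^ 2 + y -> sqrt (h ^ 2 + y) <= h + y / (2 * h).
Proof.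
  intros Hh Hy.
  assert (Hpos : 0 <= h + y / (2 * h)).
  { replace (h + y / (2 * h)) with ((h ^ 2 + y + h ^ 2) / (2 * h)) by (field; lra).
    apply div_nonneg; nra. }
  rewrite <- (sqrt_pow2 (h + y / (2 * h))) by exact Hpos.
  apply sqrt_le_1_alt.
  replace ((h + y / (2 * h)) ^ 2) with (h ^ 2 + y + (y / (2 * h)) ^ 2) by (field; lra).
  assert (0 <= (y / (2 * h)) ^ 2) by apply pow2_ge_0. lra.
Qed.

Lemma small_perturbation q s t Y :
  0 < q -> 3 / 2 <= s -> 0 <= t <= q / (2 * s) -> Rabs Y <= t ->
  Rabs (s / q * Y + s / (2 * q ^ 2) * t ^ 2) <= 0.6 /\
  (s / q * Y + s / (2 * q ^ 2) * t ^ 2) ^ 2 <= ((s + 1 / 4) / q) ^ 2 * t ^ 2.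
Proof.
  intros Hq Hs Ht HY.
  set (z := s / q * Y + s / (2 * q ^ 2) * t ^ 2).
  assert (Hz : Rabs z <= (s + 1 / 4) / q * t).
  { unfold z. eapply Rle_trans; [apply Rabs_triang|].
    assert (Hlam : 0 <= s / q) by (apply div_nonneg; lra).
    assert (Hc : 0 <= s / (2 * q ^ 2)) by (apply div_nonneg; nra).
    rewrite !Rabs_mult, (Rabs_right (s / q)), (Rabs_right (s / (2 * q ^ 2))), (Rabs_right (t ^ 2))
      by (apply Rle_ge; auto using pow2_ge_0).
    assert (Hst : s / (2 * q ^ 2) * t ^ 2 <= t / (4 * q)).
    { replace (s / (2 * q ^ 2) * t ^ 2) with (t * (s * t) / (2 * q ^ 2)) by (field; lra).
      replace (t / (4 * q)) with (t * (q / 2) / (2 * q ^ 2)) by (field; lra).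
      unfold Rdiv. apply Rmult_le_compat_r; [left; apply Rinv_0_lt_compat; nra|].
      apply Rmult_le_compat_l; [lra|].
      apply (Rle_trans _ (s * (q / (2 * s)))); [apply Rmult_le_compat_l; lra|right; field; lra]. }
    assert (s / q * Rabs Y <= s / q * t) by (apply Rmult_le_compat_l; [exact Hlam|lra]).
    replace ((s + 1 / 4) / q * t) with (s / q * t + t / (4 * q)) by (field; lra). lra. }
  assert (Hbound : (s + 1 / 4) / q * t <= 0.6).
  { apply (Rle_trans _ ((s + 1 / 4) / q * (q / (2 * s)))).
    - apply Rmult_le_compat_l; [apply div_nonneg; lra|lra].
    - replace ((s + 1 / 4) / q * (q / (2 * s))) with (1 / 2 + / (8 * s)) by (field; lra).
      assert (/ (8 * s) <= / 12) by (apply Rinv_le_contravar; lra). lra. }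
  split; [lra|].
  rewrite <- Rpow_mult_distr, <- (pow2_abs z). apply pow_incr. split; [apply Rabs_pos|exact Hz].
Qed.

(* Second-order expansion of [w |-> exp (s/q sqrt (q^2 + |w|^2))] along a step [x]:
   here [h^2 = q^2 + |w|^2], [y = <w, x>] and [n = |x|^2]. *)
Lemma exp_step_le q h s y n :
  0 < q <= h -> 3 / 2 <= s -> y ^ 2 <= h ^ 2 * n -> 0 <= n <= q ^ 2 / (4 * s ^ 2) ->
  0 <= h ^ 2 + 2 * y + n ->
  exp (s / q * sqrt (h ^ 2 + 2 * y + n))
  <= exp (s / q * h) * (1 + s / q * (y / h) + (s / (2 * q ^ 2) + ((s + 1 / 4) / q) ^ 2) * n).
Proof.
  intros [Hq Hqh] Hs Hy [Hn0 Hn] Hpos.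
  assert (Hlam : 0 <= s / q) by (apply div_nonneg; lra).
  set (t := sqrt n).
  assert (Ht2 : t ^ 2 = n) by (apply pow2_sqrt; lra).
  assert (HYt : Rabs (y / h) <= t).
  { rewrite <- (sqrt_pow2 (Rabs (y / h))), pow2_abs by apply Rabs_pos.
    apply sqrt_le_1_alt.
    replace ((y / h) ^ 2) with (y ^ 2 / h ^ 2) by (field; lra).
    apply (Rmult_le_reg_r (h ^ 2)); [nra|].
    replace (y ^ 2 / h ^ 2 * h ^ 2) with (y ^ 2) by (field; lra). lra. }
  assert (Htq : 0 <= t <= q / (2 * s)).
  { split; [apply sqrt_pos|].
    rewrite <- (sqrt_pow2 (q / (2 * s))) by (apply div_nonneg; lra).
    apply sqrt_le_1_alt. replace ((q / (2 * s)) ^ 2) with (q ^ 2 / (4 * s ^ 2)) by (field; lra). lra. }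
  destruct (small_perturbation q s t (y / h) Hq Hs Htq HYt) as [Hzsmall Hzsq].
  rewrite Ht2 in Hzsmall, Hzsq.
  set (z := s / q * (y / h) + s / (2 * q ^ 2) * n) in *.
  assert (Hexpo : s / q * sqrt (h ^ 2 + 2 * y + n) <= s / q * h + z).
  { apply Rle_trans with (s / q * (h + (2 * y + n) / (2 * h))).
    - apply Rmult_le_compat_l; [exact Hlam|].
      rewrite Rplus_assoc. apply sqrt_add_le; lra.
    - assert (Hnh : s / q * (n / (2 * h)) <= s / (2 * q ^ 2) * n).
      { replace (s / q * (n / (2 * h))) with (s * n / (2 * q * h)) by (field; lra).
        replace (s / (2 * q ^ 2) * n) with (s * n / (2 * q * q)) by (field; lra).
        unfold Rdiv. apply Rmult_le_compat_l; [nra|]. apply Rinv_le_contravar; nra. }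
      unfold z. replace (s / q * (h + (2 * y + n) / (2 * h)))
        with (s / q * h + s / q * (y / h) + s / q * (n / (2 * h))) by (field; lra).
      lra. }
  apply Rle_trans with (exp (s / q * h + z)); [apply exp_le, Hexpo|].
  rewrite exp_plus. apply Rmult_le_compat_l; [left; apply exp_pos|].
  assert (exp z <= 1 + z + z ^ 2) by (apply exp_le_quadratic, Hzsmall).
  unfold z in *. lra.
Qed.

Lemma ln_inv_pos delta : 0 < delta < 1 -> 0 < ln (1 / delta).
Proof.
  intros Hdelta. rewrite <- ln_1. apply ln_increasing; [lra|].
  unfold Rdiv. rewrite Rmult_1_l, <- Rinv_1. apply Rinv_lt_contravar; lra.
Qed.

Section RandomWalk.

Variables (d r : nat) (X : nat -> nat -> R) (sig : R).
Hypothesis Hd : (0 < d)%nat.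
Hypothesis mean_zero : forall w, sumR d (fun i => ip r w (X i)) = 0.
Hypothesis Hsig : 0 < sig.
Hypothesis variance_le : sumR d (fun i => nrm2 r (X i)) <= INR d * sig.

Lemma walk_second_moment m :
  lsum (all_lists d m) (fun Om => nrm2 r (walk X (fun _ => 0) Om)) <= INR d ^ m * (INR m * sig).
Proof.
  eapply Rle_trans; [apply (lsum_walk_le_add d X (nrm2 r) sig)|].
  - intros w.
    rewrite (sumR_ext d _ (fun i => 1 * nrm2 r w + 2 * ip r w (X i) + 1 * nrm2 r (X i)))
      by (intros; rewrite nrm2_vadd; ring).
    rewrite sumR_lin3, sumR_const, mean_zero. lra.
  - rewrite nrm2_zero, Rplus_0_l. lra.
Qed.

Definition potential (q s : R) (w : nat -> R) : R := exp (s / q * sqrt (q ^ 2 + nrm2 r w)).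

Lemma potential_step q s w :
  0 < q -> 3 / 2 <= s -> (forall i, (i < d)%nat -> nrm2 r (X i) <= q ^ 2 / (4 * s ^ 2)) ->
  sumR d (fun i => potential q s (vadd w (X i)))
  <= potential q s w * (INR d + (s / (2 * q ^ 2) + ((s + 1 / 4) / q) ^ 2) * sumR d (fun i => nrm2 r (X i))).
Proof.
  intros Hq Hs Hstep.
  set (K1 := s / (2 * q ^ 2) + ((s + 1 / 4) / q) ^ 2).
  set (h := sqrt (q ^ 2 + nrm2 r w)).
  assert (Hw := nrm2_nonneg r w).
  assert (Hh : h ^ 2 = q ^ 2 + nrm2 r w) by (apply pow2_sqrt; nra).
  assert (Hqh : q <= h).
  { rewrite <- (sqrt_pow2 q) by lra. apply sqrt_le_1_alt. lra. }
  apply Rle_trans with (sumR d (fun i => potential q s w * 1 + (potential q s w * (s / q / h)) * ip r w (X i)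
                                         + (potential q s w * K1) * nrm2 r (X i))).
  - apply sumR_le. intros i Hi. unfold potential.
    rewrite nrm2_vadd.
    replace (q ^ 2 + (nrm2 r w + 2 * ip r w (X i) + nrm2 r (X i)))
      with (h ^ 2 + 2 * ip r w (X i) + nrm2 r (X i)) by lra.
    eapply Rle_trans; [apply exp_step_le; auto|right; fold h; unfold K1; field; lra].
    + apply (Rle_trans _ (nrm2 r w * nrm2 r (X i))); [apply ip_sq_le|].
      apply Rmult_le_compat_r; [apply nrm2_nonneg|nra].
    + split; [apply nrm2_nonneg|auto].
    + pose proof (nrm2_nonneg r (vadd w (X i))) as Hv. rewrite nrm2_vadd in Hv. nra.
  - rewrite sumR_lin3, sumR_const, mean_zero. right; ring.
Qed.

Lemma walk_exp_moment q s m :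
  0 < q -> 3 / 2 <= s -> (forall i, (i < d)%nat -> nrm2 r (X i) <= q ^ 2 / (4 * s ^ 2)) ->
  q ^ 2 = INR m * sig ->
  lsum (all_lists d m) (fun Om => potential q s (walk X (fun _ => 0) Om))
  <= INR d ^ m * exp (s + (s / 2 + (s + 1 / 4) ^ 2)).
Proof.
  intros Hq Hs Hstep Hqm.
  set (K1 := s / (2 * q ^ 2) + ((s + 1 / 4) / q) ^ 2).
  assert (HK1 : 0 <= K1).
  { unfold K1. assert (0 <= s / (2 * q ^ 2)) by (apply div_nonneg; nra).
    pose proof (pow2_ge_0 ((s + 1 / 4) / q)). lra. }
  eapply Rle_trans.
  - apply (lsum_walk_le_mul d X (potential q s) (exp (K1 * sig))); [left; apply exp_pos|].
    intros w. eapply Rle_trans; [apply potential_step; auto|fold K1].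
    assert (HP : 0 < potential q s w) by apply exp_pos.
    assert (1 + K1 * sig <= exp (K1 * sig)) by apply exp_ineq1_le.
    assert (K1 * sumR d (fun i => nrm2 r (X i)) <= K1 * (INR d * sig)) by (apply Rmult_le_compat_l; auto).
    assert (0 < INR d) by (apply lt_0_INR; lia).
    rewrite (Rmult_comm _ (potential q s w)). apply Rmult_le_compat_l; nra.
  - unfold potential. rewrite nrm2_zero, Rplus_0_r, sqrt_pow2, Rpow_mult_distr, exp_pow by lra.
    rewrite Rmult_assoc, <- exp_plus. right. do 2 f_equal.
    replace (INR m * (K1 * sig)) with (K1 * q ^ 2) by (rewrite Hqm; ring).
    unfold K1. field. lra.
Qed.

Lemma walk_tail_small_deviation m L :
  (0 < m)%nat -> 0 < L <= 9 / 4 ->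
  prob_le d m (fun Om => nrm2 r (walk X (fun _ => 0) Om)) ((1 + 2 * L) ^ 2 * (INR m * sig))
  >= 1 - exp (- L).
Proof.
  intros Hm HL.
  assert (HT : 0 < INR m * sig) by (apply Rmult_lt_0_compat; [apply lt_0_INR|]; auto).
  assert (Hbeta : 1 <= (1 + 2 * L) ^ 2 * exp (- L)).
  { pose proof (exp_le_sq_one_add_twice L ltac:(lra)).
    assert (exp L * exp (- L) = 1) by (rewrite <- exp_plus, Rplus_opp_r; apply exp_0).
    pose proof (exp_pos (- L)). nra. }
  apply prob_le_markov with (Phi := fun Om => nrm2 r (walk X (fun _ => 0) Om))
                            (a := (1 + 2 * L) ^ 2 * (INR m * sig)); auto.
  - nra.
  - intros; apply nrm2_nonneg.
  - intros; lra.
  - eapply Rle_trans; [apply walk_second_moment|].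
    assert (0 < INR d ^ m * (INR m * sig)) by (apply Rmult_lt_0_compat; [apply pow_lt, lt_0_INR; lia|lra]).
    replace ((1 + 2 * L) ^ 2 * (INR m * sig) * exp (- L) * INR d ^ m)
      with (INR d ^ m * (INR m * sig) * ((1 + 2 * L) ^ 2 * exp (- L))) by ring.
    nra.
Qed.

(* With [q^2 = m sig] and [s^2 = L] the comparison of exponents reduces to
   [2 s^3 - 2 s^2 - s - 1/16 >= 0], which holds for [s >= 3/2]. *)
Lemma walk_tail_large_deviation m L :
  (0 < m)%nat -> 9 / 4 < L ->
  (forall i, (i < d)%nat -> nrm2 r (X i) <= INR m * sig / (4 * L)) ->
  prob_le d m (fun Om => nrm2 r (walk X (fun _ => 0) Om)) ((1 + 2 * L) ^ 2 * (INR m * sig))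
  >= 1 - exp (- L).
Proof.
  intros Hm HL Hstep.
  assert (HT : 0 < INR m * sig) by (apply Rmult_lt_0_compat; [apply lt_0_INR|]; auto).
  set (s := sqrt L). set (q := sqrt (INR m * sig)).
  assert (Hs2 : s ^ 2 = L) by (apply pow2_sqrt; lra).
  assert (Hq2 : q ^ 2 = INR m * sig) by (apply pow2_sqrt; lra).
  assert (Hs : 3 / 2 <= s).
  { unfold s. rewrite <- (sqrt_pow2 (3 / 2)) by lra. apply sqrt_le_1_alt. lra. }
  assert (Hq : 0 < q) by (apply sqrt_lt_R0; lra).
  apply prob_le_markov with (Phi := fun Om => potential q s (walk X (fun _ => 0) Om))
                            (a := exp ((1 + 2 * L) * s)); auto.
  - apply exp_pos.
  - intros; left; apply exp_pos.
  - intros Om Hbad. apply exp_le.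
    replace ((1 + 2 * L) * s) with (s / q * ((1 + 2 * L) * q)) by (field; lra).
    apply Rmult_le_compat_l; [apply div_nonneg; lra|].
    rewrite <- (sqrt_pow2 ((1 + 2 * L) * q)) by nra.
    apply sqrt_le_1_alt. pose proof (nrm2_nonneg r (walk X (fun _ => 0) Om)).
    rewrite Rpow_mult_distr, Hq2. lra.
  - eapply Rle_trans; [apply walk_exp_moment; auto|].
    + intros i Hi. rewrite Hq2, Hs2. auto.
    + rewrite <- exp_plus, (Rmult_comm (exp _)).
      apply Rmult_le_compat_l; [apply pow_le, pos_INR|]. apply exp_le.
      rewrite <- Hs2. assert (0 <= 2 * s ^ 3 - 2 * s ^ 2 - s - 1 / 16) by nra. nra.
Qed.

Theorem walk_tail m delta :
  (0 < m)%nat -> 0 < delta < 1 ->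
  (forall i, (i < d)%nat -> nrm2 r (X i) <= INR m * sig / (4 * ln (1 / delta))) ->
  prob_le d m (fun Om => nrm2 r (walk X (fun _ => 0) Om))
    ((1 + 2 * ln (1 / delta)) ^ 2 * (INR m * sig)) >= 1 - delta.
Proof.
  intros Hm Hdelta Hstep.
  assert (HL := ln_inv_pos delta Hdelta).
  set (L := ln (1 / delta)) in *.
  assert (Hinv : 0 < 1 / delta) by (unfold Rdiv; rewrite Rmult_1_l; apply Rinv_0_lt_compat; lra).
  replace delta with (exp (- L))
    by (unfold L; rewrite <- ln_Rinv, exp_ln by auto using Rinv_0_lt_compat; field; lra).
  destruct (Rle_dec L (9 / 4)).
  - apply walk_tail_small_deviation; auto.
  - apply walk_tail_large_deviation; auto; lra.
Qed.

End RandomWalk.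

Definition scaled_row (U : nat -> nat -> R) (v : nat -> R) (i : nat) : nat -> R :=
  fun k => U i k * v i.

Lemma sampled_sq_walk r U v Om :
  sampled_sq r U v Om = nrm2 r (walk (scaled_row U v) (fun _ => 0) Om).
Proof.
  unfold sampled_sq, nrm2. apply sumR_ext. intros k Hk.
  rewrite walk_eq, Rplus_0_l. reflexivity.
Qed.

Lemma nrm2_scaled_row r U v i : nrm2 r (scaled_row U v i) = v i ^ 2 * nrm2 r (U i).
Proof. unfold nrm2, scaled_row. rewrite <- sumR_scal. apply sumR_ext; intros; ring. Qed.

Lemma sum_ip_scaled_row d r U v w :
  in_perp d r U v -> sumR d (fun i => ip r w (scaled_row U v i)) = 0.
Proof.
  intros Hperp. unfold ip, scaled_row. rewrite sumR_swap.
  rewrite (sumR_ext r _ (fun _ => 0)), sumR_const; [ring|].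
  intros k Hk. rewrite sumR_scal, Hperp by exact Hk. ring.
Qed.

Lemma norm2sq_proj_e d r U i :
  orthonormal_cols d r U -> norm2sq d (proj_e r U i) = nrm2 r (U i).
Proof.
  intros HO. unfold norm2sq, proj_e, nrm2.
  rewrite (sumR_ext d _ (fun j => sumR r (fun k => sumR r (fun l => U i k * U i l * (U j k * U j l))))).
  2:{ intros j Hj. rewrite <- Rsqr_pow2. unfold Rsqr. rewrite sumR_mul.
      apply sumR_ext; intros; apply sumR_ext; intros; ring. }
  rewrite sumR_swap. apply sumR_ext. intros k Hk.
  rewrite sumR_swap, (sumR_ext r _ (fun l => U i k * U i l * (if Nat.eqb k l then 1 else 0))).
  - rewrite (sumR_kronecker r (fun l => U i k * U i l)) by exact Hk. ring.
  - intros l Hl. rewrite sumR_scal, HO; auto.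
Qed.

Lemma sum_nrm2_rows d r U :
  orthonormal_cols d r U -> sumR d (fun i => nrm2 r (U i)) = INR r.
Proof.
  intros HO. unfold nrm2. rewrite sumR_swap.
  rewrite (sumR_ext r _ (fun _ => 1)), sumR_const; [ring|].
  intros k Hk. specialize (HO k k Hk Hk). rewrite Nat.eqb_refl in HO.
  rewrite <- HO. apply sumR_ext; intros; ring.
Qed.

Lemma nrm2_row_le_muU d r U i :
  (1 <= r)%nat -> (i < d)%nat -> orthonormal_cols d r U ->
  nrm2 r (U i) <= INR r * muU d r U / INR d.
Proof.
  intros Hr Hi HO.
  assert (0 < INR d) by (apply lt_0_INR; lia).
  assert (1 <= INR r) by (apply (le_INR 1); exact Hr).
  replace (INR r * muU d r U / INR d) with (maxR d (fun j => norm2sq d (proj_e r U j)))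
    by (unfold muU; field; lra).
  rewrite <- (norm2sq_proj_e d r U i HO).
  apply (maxR_ge d (fun j => norm2sq d (proj_e r U j))), Hi.
Qed.

Lemma muU_pos d r U :
  (1 <= r)%nat -> (0 < d)%nat -> orthonormal_cols d r U -> 0 < INR r * muU d r U / INR d.
Proof.
  intros Hr Hd HO.
  assert (Hd' : 0 < INR d) by (apply lt_0_INR; lia).
  assert (1 <= INR r) by (apply (le_INR 1); exact Hr).
  assert (Hsum : INR r <= INR d * (INR r * muU d r U / INR d)).
  { rewrite <- (sum_nrm2_rows d r U HO) at 1. rewrite <- sumR_const.
    apply sumR_le. intros i Hi. apply nrm2_row_le_muU; auto. }
  nra.
Qed.

Lemma sq_le_muv d v i :
  (i < d)%nat -> 0 < norm2sq d v -> v i ^ 2 <= muv d v * norm2sq d v / INR d.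
Proof.
  intros Hi Hv.
  assert (0 < INR d) by (apply lt_0_INR; lia).
  replace (muv d v * norm2sq d v / INR d) with (maxR d (fun j => Rabs (v j)) ^ 2)
    by (unfold muv; field; lra).
  rewrite <- (pow2_abs (v i)). apply pow_incr.
  split; [apply Rabs_pos|apply (maxR_ge d (fun j => Rabs (v j))), Hi].
Qed.

Lemma norm2sq_pos d v : (exists i, (i < d)%nat /\ v i <> 0) -> 0 < norm2sq d v.
Proof.
  intros [i [Hi Hvi]].
  apply (Rlt_le_trans _ (v i ^ 2)); [rewrite <- Rsqr_pow2; apply Rsqr_pos_lt, Hvi|].
  apply (sumR_term_le d (fun j => v j ^ 2)); [intros; apply pow2_ge_0|exact Hi].
Qed.

Lemma muv_pos d v : (exists i, (i < d)%nat /\ v i <> 0) -> 0 < muv d v.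
Proof.
  intros Hv. assert (Hnv := norm2sq_pos d v Hv). destruct Hv as [i [Hi Hvi]].
  assert (0 < INR d) by (apply lt_0_INR; lia).
  assert (0 < v i ^ 2) by (rewrite <- Rsqr_pow2; apply Rsqr_pos_lt, Hvi).
  pose proof (sq_le_muv d v i Hi Hnv).
  apply (Rmult_lt_reg_r (norm2sq d v / INR d)); [apply Rdiv_lt_0_compat; lra|].
  unfold Rdiv in *. rewrite Rmult_0_l, <- Rmult_assoc. lra.
Qed.

Lemma nrm2_scaled_row_le d r U v i :
  (1 <= r)%nat -> orthonormal_cols d r U -> 0 < norm2sq d v -> (i < d)%nat ->
  nrm2 r (scaled_row U v i) <= muv d v * norm2sq d v / INR d * (INR r * muU d r U / INR d).
Proof.
  intros Hr HO Hv Hi. rewrite nrm2_scaled_row.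
  apply Rmult_le_compat; auto using pow2_ge_0, nrm2_nonneg, sq_le_muv, nrm2_row_le_muU.
Qed.

Lemma sum_nrm2_scaled_row_le d r U v :
  (1 <= r)%nat -> orthonormal_cols d r U ->
  sumR d (fun i => nrm2 r (scaled_row U v i)) <= INR r * muU d r U / INR d * norm2sq d v.
Proof.
  intros Hr HO. unfold norm2sq. rewrite <- sumR_scal. apply sumR_le. intros i Hi.
  rewrite nrm2_scaled_row, Rmult_comm.
  apply Rmult_le_compat_r; [apply pow2_ge_0|apply nrm2_row_le_muU; auto].
Qed.

Theorem lemma4 (d r m : nat) (U : nat -> nat -> R) (v : nat -> R) (delta : R) :
  (1 <= r)%nat ->
  orthonormal_cols d r U ->
  in_perp d r U v ->
  (exists i, (i < d)%nat /\ v i <> 0) ->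
  0 < delta < 1 ->
  INR m >= 4 * muv d v * ln (1 / delta) ->
  let beta := (1 + 2 * ln (1 / delta)) ^ 2 in
  prob_le d m (sampled_sq r U v)
    (beta * (INR m / INR d) * (INR r * muU d r U / INR d) * norm2sq d v)
  >= 1 - delta.
Proof.
  intros Hr HO Hperp Hv Hdelta Hm beta.
  assert (Hd : (0 < d)%nat) by (destruct Hv as [i [Hi _]]; lia).
  assert (Hd' : 0 < INR d) by (apply lt_0_INR, Hd).
  assert (HL := ln_inv_pos delta Hdelta). assert (Hmuv := muv_pos d v Hv).
  set (L := ln (1 / delta)) in *.
  set (nv := norm2sq d v). assert (Hnv : 0 < nv) by (apply norm2sq_pos, Hv).
  set (rho := INR r * muU d r U / INR d). assert (Hrho : 0 < rho) by (apply muU_pos; auto).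
  assert (Hm0 : (0 < m)%nat) by (destruct m; [simpl in Hm; nra|lia]).
  replace (beta * (INR m / INR d) * rho * nv) with ((1 + 2 * L) ^ 2 * (INR m * (rho * nv / INR d)))
    by (unfold beta; field; lra).
  rewrite (prob_le_ext _ _ _ _ _ (sampled_sq_walk r U v)).
  apply walk_tail; auto.
  - intros w. apply sum_ip_scaled_row, Hperp.
  - apply Rdiv_lt_0_compat; [apply Rmult_lt_0_compat|]; lra.
  - replace (INR d * (rho * nv / INR d)) with (rho * nv) by (field; lra).
    apply sum_nrm2_scaled_row_le; auto.
  - intros i Hi. fold L.
    apply (Rle_trans _ _ _ (nrm2_scaled_row_le d r U v i Hr HO Hnv Hi)). fold nv rho.
    replace (INR m * (rho * nv / INR d) / (4 * L)) with (INR m / (4 * L) * (nv / INR d * rho))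
      by (field; lra).
    replace (muv d v * nv / INR d * rho) with (muv d v * (nv / INR d * rho)) by (field; lra).
    apply Rmult_le_compat_r; [apply Rmult_le_pos; [apply div_nonneg|]; lra|].
    apply (Rmult_le_reg_r (4 * L)); [lra|].
    replace (INR m / (4 * L) * (4 * L)) with (INR m) by (field; lra). lra.
Qed.
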